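(* Assume $\mu\le1$. Then for every positive integer $r$, $$\mathbf{P}[M\ge r]\le\frac1r.$$
   Context: Let $p=(p_0,p_1,p_2,\dots)$ be a probability distribution on the nonnegative integers with mean $\mu=\sum_k kp_k\in(0,\infty)$, and let $\tau(p)$ be a Galton–Watson tree with offspring distribution $p$: it starts with a single root at generation $0$, and every vertex independently has $k$children with probability $p_k$. The out-degree of a vertex is its number of children. $M$ denotes the global maximal out-degree, i.e. the supremum of the out-degrees of all vertices of $\tau(p)$. *)

From Stdlib Require Import Reals List.
Import ListNotations.
Open Scope R_scope.

(* Finite plane trees; used to represent the first n generations of a
   Galton-Watson tree: a vertex at depth < n is a node whose list of
   children is its full offspring list; vertices at depth n are
   represented by [PNode []] and their offspring is not observed. *)
Inductive ptree : Type := PNode : list ptree -> ptree.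

Fixpoint tuples {A : Type} (k : nat) (l : list A) : list (list A) :=
  match k with
  | O => [[]]
  | S k' => flat_map (fun x => map (cons x) (tuples k' l)) l
  end.

(* All possible shapes of the first n generations (generations 0..n-1
   observed) in which every observed vertex has out-degree < r.
   This list has no repetitions. *)
Fixpoint trees_lt (r n : nat) : list ptree :=
  match n with
  | O => [PNode []]
  | S n' => flat_map (fun k => map PNode (tuples k (trees_lt r n'))) (seq 0 r)
  end.

(* Galton-Watson probability (offspring law p) that the first n generations
   of tau(p) have shape t: product of p(out-degree) over vertices of
   depth < n. *)
Fixpoint gw_weight (p : nat -> R) (n : nat) (t : ptree) : R :=
  match n with
  | O => 1
  | S n' =>
      match t with
      | PNode ts =>
          p (length ts) * fold_right (fun s acc => gw_weight p n' s * acc) 1 ts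
      end
  end.

(* P[ every vertex of tau(p) in generations 0..n-1 has out-degree < r ] *)
Definition prob_maxdeg_lt_upto (p : nat -> R) (r n : nat) : R :=
  fold_right Rplus 0 (map (gw_weight p n) (trees_lt r n)).

(* x = P[M >= r]: the events {max out-degree in generations < n is < r}
   decrease to {M < r}, so by continuity of measure
   P[M < r] = lim_n prob_maxdeg_lt_upto p r n. *)
Definition is_prob_M_ge (p : nat -> R) (r : nat) (x : R) : Prop :=
  Un_cv (fun n => prob_maxdeg_lt_upto p r n) (1 - x).

(* Let q_n be the probability that no vertex in the first n generations has
   r or more children.  Splitting at the root gives q_(n+1) = G (q_n) with
   G s = sum_(k<r) p_k s^k.  By Bernoulli's inequality s^k >= 1 + k (s - 1),
   and since sum_(k<r) (r - k) p_k >= r - mu >= r - 1, the map G sends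
   [1 - 1/r, oo) into itself; as G is monotone and G 1 <= 1 = q_0, the q_n
   decrease to P[M < r] >= 1 - 1/r. *)

From Stdlib Require Import Reals List Lra Lia.
Import ListNotations.
Open Scope R_scope.

Definition sumR (l : list R) : R := fold_right Rplus 0 l.

Lemma sumR_app l1 l2 : sumR (l1 ++ l2) = sumR l1 + sumR l2.
Proof. induction l1 as [|x l1 IH]; simpl; [ring | rewrite IH; ring]. Qed.

Lemma sumR_map_flat_map {A B : Type} (f : B -> R) (g : A -> list B) (l : list A) :
  sumR (map f (flat_map g l)) = sumR (map (fun x => sumR (map f (g x))) l).
Proof.
  induction l as [|x l IH]; simpl; [reflexivity|].
  now rewrite map_app, sumR_app, IH.
Qed.

Lemma sumR_map_scal {A : Type} (a : R) (f : A -> R) l :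
  sumR (map (fun x => a * f x) l) = a * sumR (map f l).
Proof. induction l as [|x l IH]; simpl; [ring | rewrite IH; ring]. Qed.

Lemma sumR_map_le {A : Type} (f g : A -> R) l :
  (forall x, f x <= g x) -> sumR (map f l) <= sumR (map g l).
Proof. intro Hfg; induction l as [|x l IH]; simpl; [lra | specialize (Hfg x); lra]. Qed.

Lemma sumR_map_seq (g : nat -> R) m : sumR (map g (seq 0 (S m))) = sum_f_R0 g m.
Proof.
  induction m as [|m IH]; [simpl; ring|].
  rewrite seq_S, map_app, sumR_app, IH; simpl; ring.
Qed.

Lemma tuples_length {A : Type} k (l : list A) ts : In ts (tuples k l) -> length ts = k.
Proof.
  revert ts; induction k as [|k IH]; simpl; intros ts Hts.
  - now destruct Hts as [<- | []].
  - apply in_flat_map in Hts as [x [_ Hx]].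
    apply in_map_iff in Hx as [ts' [<- Hts']].
    simpl; now rewrite (IH ts').
Qed.

Lemma sumR_tuples_prod {A : Type} (w : A -> R) k (l : list A) :
  sumR (map (fold_right (fun s acc => w s * acc) 1) (tuples k l)) = sumR (map w l) ^ k.
Proof.
  induction k as [|k IH]; simpl; [ring|].
  rewrite sumR_map_flat_map, (Rmult_comm (sumR _)), <- sumR_map_scal.
  f_equal; apply map_ext; intro x.
  rewrite map_map, <- IH, Rmult_comm, <- sumR_map_scal.
  reflexivity.
Qed.

Definition trunc_pgf (p : nat -> R) (r : nat) (s : R) : R :=
  sumR (map (fun k => p k * s ^ k) (seq 0 r)).

Lemma prob_maxdeg_lt_upto_0 p r : prob_maxdeg_lt_upto p r 0 = 1.
Proof. unfold prob_maxdeg_lt_upto; simpl; ring. Qed.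

Lemma prob_maxdeg_lt_upto_S p r n :
  prob_maxdeg_lt_upto p r (S n) = trunc_pgf p r (prob_maxdeg_lt_upto p r n).
Proof.
  unfold prob_maxdeg_lt_upto, trunc_pgf; simpl trees_lt.
  change (sumR (map (gw_weight p (S n))
    (flat_map (fun k => map PNode (tuples k (trees_lt r n))) (seq 0 r)))
    = sumR (map (fun k => p k * sumR (map (gw_weight p n) (trees_lt r n)) ^ k) (seq 0 r))).
  rewrite sumR_map_flat_map; f_equal; apply map_ext; intro k.
  rewrite map_map, <- sumR_tuples_prod, <- sumR_map_scal.
  f_equal; apply map_ext_in; intros ts Hts.
  simpl; now rewrite (tuples_length _ _ _ Hts).
Qed.

Lemma trunc_pgf_le p r s t :
  (forall k, 0 <= p k) -> 0 <= s <= t -> trunc_pgf p r s <= trunc_pgf p r t.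
Proof.
  intros Hp Hst; apply sumR_map_le; intro k.
  apply Rmult_le_compat_l; [apply Hp | apply pow_incr; lra].
Qed.

Lemma trunc_pgf_1_le p r :
  (forall k, 0 <= p k) -> infinite_sum p 1 -> trunc_pgf p r 1 <= 1.
Proof.
  intros Hp Hsum; destruct r as [|m]; [unfold trunc_pgf; simpl; lra|].
  unfold trunc_pgf; rewrite (map_ext _ p) by (intro; rewrite pow1; ring).
  rewrite sumR_map_seq; apply growing_ineq; [|exact Hsum].
  intro n; rewrite tech5; specialize (Hp (S n)); lra.
Qed.

Lemma pow_ge_bernoulli (s : R) k : 0 <= s -> 1 + INR k * (s - 1) <= s ^ k.
Proof.
  intro Hs; induction k as [|k IH]; [unfold trunc_pgf; simpl; lra|].
  rewrite S_INR; simpl.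
  assert (0 <= INR k) by apply pos_INR.
  assert (s * (1 + INR k * (s - 1)) <= s * s ^ k) by (apply Rmult_le_compat_l; lra).
  assert (0 <= INR k * ((s - 1) * (s - 1))) by (apply Rmult_le_pos; [lra | apply Rle_0_sqr]).
  nra.
Qed.

Lemma Un_cv_const (c : R) : Un_cv (fun _ => c) c.
Proof.
  intros eps Heps; exists 0%nat; intros n _; unfold Rdist.
  rewrite Rminus_diag, Rabs_R0; exact Heps.
Qed.

Lemma Un_cv_ext (u v : nat -> R) (l : R) : (forall n, u n = v n) -> Un_cv u l -> Un_cv v l.
Proof.
  intros Huv Hu eps Heps; destruct (Hu eps Heps) as [N HN].
  exists N; intros n Hn; rewrite <- Huv; exact (HN n Hn).
Qed.

Lemma Un_cv_ge (u : nat -> R) (c l : R) : (forall n, c <= u n) -> Un_cv u l -> c <= l.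
Proof. intros Hc Hu; exact (Rle_cv_lim Hc (Un_cv_const c) Hu). Qed.

Lemma partial_moment_gap_le p mu m :
  (forall k, 0 <= p k) -> infinite_sum p 1 ->
  infinite_sum (fun k => INR k * p k) mu ->
  sum_f_R0 (fun k => (INR k - INR (S m)) * p k) m <= mu - INR (S m).
Proof.
  intros Hp Hsum Hmu.
  set (f := fun k => (INR k - INR (S m)) * p k).
  assert (Hcv : Un_cv (sum_f_R0 f) (mu - INR (S m) * 1)).
  { apply (Un_cv_ext (fun n => sum_f_R0 (fun k => INR k * p k) n - INR (S m) * sum_f_R0 p n)).
    - intro n; rewrite scal_sum, <- minus_sum; apply sum_eq; intros k _; unfold f; ring.
    - exact (CV_minus _ _ _ _ Hmu (CV_mult _ _ _ _ (Un_cv_const _) Hsum)). }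
  rewrite <- (Rmult_1_r (INR (S m))).
  apply (Un_cv_ge (fun n => sum_f_R0 f (n + m))); [|exact (CV_shift' _ m _ Hcv)].
  induction n as [|n IH]; [apply Rle_refl|].
  simpl Nat.add; rewrite tech5.
  assert (0 <= f (S (n + m))).
  { apply Rmult_le_pos; [|apply Hp].
    apply Rge_le, Rge_minus, Rle_ge, le_INR; lia. }
  lra.
Qed.

Lemma trunc_pgf_ge p mu m :
  (forall k, 0 <= p k) -> infinite_sum p 1 ->
  infinite_sum (fun k => INR k * p k) mu -> mu <= 1 ->
  forall s, 0 <= s -> 1 - 1 / INR (S m) <= s ->
  1 - 1 / INR (S m) <= trunc_pgf p (S m) s.
Proof.
  intros Hp Hsum Hmu Hmu1 s Hs0 Hs.
  set (r := INR (S m)) in *.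
  assert (Hr : 0 < r) by (apply lt_0_INR; lia).
  assert (Hlin : sumR (map (fun k => p k * (1 - INR k / r)) (seq 0 (S m)))
                 <= trunc_pgf p (S m) s).
  { apply sumR_map_le; intro k; apply Rmult_le_compat_l; [apply Hp|].
    apply Rle_trans with (2 := pow_ge_bernoulli s k Hs0).
    assert (Hk : 0 <= INR k) by apply pos_INR.
    assert (INR k * (- (1 / r)) <= INR k * (s - 1)) by (apply Rmult_le_compat_l; [lra|]; lra).
    replace (INR k * - (1 / r)) with (- (INR k / r)) in * by (field; lra).
    lra. }
  assert (Hgap : sumR (map (fun k => p k * (1 - INR k / r)) (seq 0 (S m)))
                 = - / r * sum_f_R0 (fun k => (INR k - r) * p k) m).
  { rewrite sumR_map_seq, scal_sum; apply sum_eq; intros k _; field; lra. }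
  pose proof (partial_moment_gap_le p mu m Hp Hsum Hmu) as Hmom; fold r in Hmom.
  assert (- / r * (mu - r) <= - / r * sum_f_R0 (fun k => (INR k - r) * p k) m).
  { apply Rmult_le_compat_neg_l; [|exact Hmom].
    assert (0 < / r) by (apply Rinv_0_lt_compat, Hr); lra. }
  replace (- / r * (mu - r)) with (1 - mu / r) in * by (field; lra).
  assert (mu / r <= 1 / r) by (apply Rmult_le_compat_r; [apply Rlt_le, Rinv_0_lt_compat|]; lra).
  lra.
Qed.

Lemma monotone_iteration_cv (G : R -> R) (x : nat -> R) (c : R) :
  (forall n, x (S n) = G (x n)) ->
  (forall s t, c <= s <= t -> G s <= G t) ->
  (forall s, c <= s -> c <= G s) ->
  c <= x 0%nat -> x 1%nat <= x 0%nat ->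
  exists L, Un_cv x L /\ c <= L.
Proof.
  intros Hx Hmono Hinv Hc0 H10.
  assert (Hc : forall n, c <= x n).
  { induction n as [|n IH]; [exact Hc0 | rewrite Hx; exact (Hinv _ IH)]. }
  assert (Hdec : Un_decreasing x).
  { intro n; induction n as [|n IH]; [exact H10|].
    rewrite (Hx (S n)); rewrite (Hx n) at 2; apply Hmono; split; [apply Hc | exact IH]. }
  assert (Hlb : has_lb x).
  { exists (- c); intros y [n ->]; unfold opp_seq; specialize (Hc n); lra. }
  destruct (decreasing_cv x Hdec Hlb) as [L HL].
  exists L; split; [exact HL | exact (Un_cv_ge x c L Hc HL)].
Qed.

Theorem lemma2p7 (p : nat -> R) (mu : R)
  (Hp_nonneg : forall k, 0 <= p k)
  (Hp_sum : infinite_sum p 1)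
  (Hmu : infinite_sum (fun k => INR k * p k) mu)
  (Hmu_pos : 0 < mu)
  (Hmu_le1 : mu <= 1)
  (r : nat) (Hr : (1 <= r)%nat) :
  exists x, is_prob_M_ge p r x /\ x <= 1 / INR r.
Proof.
  destruct r as [|m]; [lia|].
  assert (Hinv : 0 < 1 / INR (S m) <= 1).
  { assert (1 <= INR (S m)) by (rewrite S_INR; pose proof (pos_INR m); lra).
    split; [apply Rdiv_lt_0_compat; lra|].
    unfold Rdiv; rewrite Rmult_1_l, <- Rinv_1; apply Rinv_le_contravar; lra. }
  destruct (monotone_iteration_cv (trunc_pgf p (S m)) (prob_maxdeg_lt_upto p (S m))
              (1 - 1 / INR (S m))) as [L [HL HcL]].
  - apply prob_maxdeg_lt_upto_S.
  - intros s t Hst; apply trunc_pgf_le; [exact Hp_nonneg | lra].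
  - intros s Hs; apply (trunc_pgf_ge p mu); auto; lra.
  - rewrite prob_maxdeg_lt_upto_0; lra.
  - rewrite prob_maxdeg_lt_upto_S, prob_maxdeg_lt_upto_0.
    exact (trunc_pgf_1_le p (S m) Hp_nonneg Hp_sum).
  - exists (1 - L); split; [|lra].
    unfold is_prob_M_ge; replace (1 - (1 - L)) with L by ring; exact HL.
Qed.
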